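(* Let $\mathfrak A$ be the real algebra of generalized transformations equipped with the involution $\mathcal A\mapsto\mathcal A'$ (a generalized adjoint), and let $\varphi=\Phi|_1$ be the local state of a symmetric faithful state $\Phi$ which is also preparationally faithful. Define $\langle\mathcal A|\mathcal B\rangle_\varphi=\varphi(\mathcal A'\circ\mathcal B)$, $\|\mathcal A\|_\varphi=\sqrt{\langle\mathcal A|\mathcal A\rangle_\varphi}$, and the left ideal $\mathfrak I=\{\mathcal X\in\mathfrak A:\varphi(\mathcal X'\circ\mathcal X)=0\}$. Let $\mathcal A,\mathcal B\in\mathfrak A$ be bounded, i.e. $\|\mathcal A\|,\|\mathcal A'\|,\|\mathcal B\|,\|\mathcal B'\|<\infty$ where $\|\mathcal C\|=\sup_{\omega\in\mathfrak S}|\omega(\mathcal C)|$. Then $\mathcal A-\mathcal B\in\mathfrak I$ (i.e. $\mathcal A$ and $\mathcal B$ lie in the same class of $\mathfrak A/\mathfrak I$) if and only if $\mathcal A$ and $\mathcal B$ are informationally equivalent, i.e. $\omega(\mathcal A)=\omega(\mathcal B)$ for all $\omega\in\mathfrak S$.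
   Context: States $\omega\in\mathfrak S$ extend linearly to $\mathfrak A$. A generalized adjoint on $\mathfrak A$ satisfies $(\mathcal A+\mathcal B)'=\mathcal A'+\mathcal B'$, $(\mathcal A')'=\mathcal A$, $(\mathcal A\circ\mathcal B)'=\mathcal B'\circ\mathcal A'$, and $\mathcal A'\circ\mathcal A=0\Rightarrow\mathcal A=0$. $\varphi$ is a state and a real positive form: $\varphi(\mathcal A')=\varphi(\mathcal A)$ and $\varphi(\mathcal A'\circ\mathcal A)\ge0$ for all $\mathcal A\in\mathfrak A$; moreover $\|\mathcal C\circ\mathcal D\|\le\|\mathcal C\|\|\mathcal D\|$. Preparational faithfulness is used in the form: for every $\omega\in\mathfrak S$ there is a transformation $\mathcal T_\omega$ with $\varphi(\mathcal T_\omega)\ne0$ such that $\omega(\mathcal A)=\varphi(\mathcal A\circ\mathcal T_\omega')/\varphi(\mathcal T_\omega)=\langle\mathcal A'|\tilde{\mathcal T}_\omega\rangle_\varphi$ for all $\mathcal A$, where $\tilde{\mathcal T}_\omega=\mathcal T_\omega'/\varphi(\mathcal T_\omega)$. *)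

From HB Require Import structures.
From mathcomp Require Import all_boot all_order all_algebra.
From mathcomp Require Import all_classical reals ereal.
Set Implicit Arguments. Unset Strict Implicit. Unset Printing Implicit Defensive.
Import Order.TTheory GRing.Theory Num.Theory.
Local Open Scope ring_scope.
Local Open Scope classical_set_scope.

(* Abstract setting: R real numbers, A a real algebra whose multiplication is
   the composition "\circ" of generalized transformations, adj the
   generalized adjoint A |-> A', S the set of states (real functionals on A). *)

Definition generalized_adjoint (R : realType) (A : algType R) (adj : A -> A) :=
  [/\ forall X Y : A, adj (X + Y) = adj X + adj Y,
      forall X : A, adj (adj X) = X,
      forall X Y : A, adj (X * Y) = adj Y * adj X
    & forall X : A, adj X * X = 0 -> X = 0].

Definition linear_states (R : realType) (A : algType R) (S : set (A -> R)) :=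
  forall w, S w -> forall (a : R) (X Y : A), w (a *: X + Y) = a * w X + w Y.

Definition snorm (R : realType) (A : algType R) (S : set (A -> R)) (C : A)
  : \bar R := ereal_sup [set (`|w C|)%:E | w in S].

Definition bounded (R : realType) (A : algType R) (S : set (A -> R))
  (adj : A -> A) (C : A) :=
  (snorm S C < +oo)%E /\ (snorm S (adj C) < +oo)%E.

Definition inner (R : realType) (A : algType R) (phi : A -> R) (adj : A -> A)
  (X Y : A) : R := phi (adj X * Y).

Definition null_ideal (R : realType) (A : algType R) (phi : A -> R)
  (adj : A -> A) : set A := [set X | inner phi adj X X = 0].

Definition real_positive (R : realType) (A : algType R) (phi : A -> R)
  (adj : A -> A) :=
  (forall X, phi (adj X) = phi X) /\ (forall X, 0 <= phi (adj X * X)).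

(* Preparational faithfulness, in the form used:
   w(X) = phi(X o T_w') / phi(T_w). *)
Definition prep_faithful (R : realType) (A : algType R) (S : set (A -> R))
  (phi : A -> R) (adj : A -> A) :=
  forall w, S w -> exists T : A, phi T != 0 /\
    forall X : A, w X = phi (X * adj T) / phi T.

Definition info_equiv (R : realType) (A : algType R) (S : set (A -> R))
  (X Y : A) := forall w, S w -> w X = w Y.

From HB Require Import structures.
From mathcomp Require Import all_boot all_order all_algebra.
From mathcomp Require Import all_classical reals ereal.
Import Order.TTheory GRing.Theory Num.Theory.
Local Open Scope ring_scope.
Local Open Scope classical_set_scope.

Set Implicit Arguments. Unset Strict Implicit. Unset Printing Implicit Defensive.

(* Write Z = X - Y. By Cauchy-Schwarz for the positive form phi, phi(Z'Z) = 0
   forces phi(Z'V) = 0 for every V; since preparational faithfulness writes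
   every state as w(C) = phi(C T')/phi(T), every state vanishes on Z'.
   Submultiplicativity of the sup-norm then gives phi(Z Z') = 0, so Z' is null
   too and every state vanishes on Z'' = Z. Conversely, if every state vanishes
   on Z, the norm of Z'Z is at most ||Z'|| * 0, whence phi(Z'Z) = 0. *)

Section AdditiveMap.
Variables (U V : zmodType) (f : U -> V).
Hypothesis fD : forall x y, f (x + y) = f x + f y.

Lemma additive_map0 : f 0 = 0.
Proof. by apply: (@addrI _ (f 0)); rewrite -fD !addr0. Qed.

Lemma additive_mapN x : f (- x) = - f x.
Proof. by apply: (@addrI _ (f x)); rewrite -fD !subrr additive_map0. Qed.

Lemma additive_mapB x y : f (x - y) = f x - f y.
Proof. by rewrite fD additive_mapN. Qed.

Lemma additive_mapMn x n : f (x *+ n) = f x *+ n.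
Proof.
elim: n => [|n IHn]; first by rewrite !mulr0n additive_map0.
by rewrite !mulrS fD IHn.
Qed.

End AdditiveMap.

Lemma linear_functionalD (R : pzRingType) (M : lmodType R) (f : M -> R) :
  (forall a X Y, f (a *: X + Y) = a * f X + f Y) ->
  forall X Y, f (X + Y) = f X + f Y.
Proof. by move=> f_lin X Y; rewrite -[X]scale1r f_lin mul1r scale1r. Qed.

Lemma eq0_natmul_bounded (F : archiRealFieldType) (c b : F) :
  (forall n, `|c| *+ n <= b) -> c = 0.
Proof.
move=> cnb; apply/eqP; apply: contraT => c_neq0.
have c_gt0 : 0 < `|c| by rewrite normr_gt0.
have b_ge0 : 0 <= b by have := cnb 0%N; rewrite mulr0n.
have := archi_boundP (divr_ge0 b_ge0 (ltW c_gt0)).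
rewrite ltr_pdivrMr // mulr_natl => /lt_le_trans/(_ (cnb _)).
by rewrite ltxx.
Qed.

Section CauchySchwarz.
Variables (R : realType) (A : algType R) (adj : A -> A) (phi : A -> R).
Hypotheses (adjD : forall X Y, adj (X + Y) = adj X + adj Y)
  (adjK : involutive adj) (adjM : forall X Y, adj (X * Y) = adj Y * adj X).
Hypotheses (phi_lin : forall a X Y, phi (a *: X + Y) = a * phi X + phi Y)
  (phi_pos : real_positive phi adj).

Let phiD := linear_functionalD phi_lin.

Lemma inner_sym U V : inner phi adj V U = inner phi adj U V.
Proof. by rewrite /inner -(proj1 phi_pos) adjM adjK. Qed.

(* The adjoint is only additive, not R-linear, so the quadratic-form argument
   runs over natural multiples of U. *)
Lemma inner_add_null_natmul U V n : null_ideal phi adj U ->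
  inner phi adj (V + U *+ n) (V + U *+ n) =
  inner phi adj V V + (inner phi adj U V *+ 2) *+ n.
Proof.
rewrite /null_ideal /inner /= => U_null.
rewrite adjD (additive_mapMn adjD) mulrDl !mulrDr !mulrnAl !mulrnAr.
rewrite !phiD !(additive_mapMn phiD) U_null !mul0rn addr0.
by rewrite [phi (adj V * U)]inner_sym -addrA -mulrnDl mulr2n.
Qed.

Lemma inner_null_l U V : null_ideal phi adj U -> inner phi adj U V = 0.
Proof.
move=> U_null; set a := inner phi adj U V.
have inner_ge0 W : 0 <= inner phi adj W W := proj2 phi_pos W.
have innerNN W : inner phi adj (- W) (- W) = inner phi adj W W.
  by rewrite /inner (additive_mapN adjD) mulrNN.
have innerNr W : inner phi adj U (- W) = - inner phi adj U W.
  by rewrite /inner mulrN (additive_mapN phiD).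
suff /eqP : a *+ 2 = 0 by rewrite mulrn_eq0 => /eqP.
apply: (@eq0_natmul_bounded _ _ (inner phi adj V V)) => n.
rewrite -normrMn ler_norml; apply/andP; split.
- by rewrite lerNl -subr_ge0 opprK -inner_add_null_natmul.
- rewrite -subr_ge0 -innerNN -!mulNrn -innerNr.
  by rewrite -inner_add_null_natmul.
Qed.

End CauchySchwarz.

Section States.
Variables (R : realType) (A : algType R) (adj : A -> A) (S : set (A -> R)).
Hypotheses (S_lin : linear_states S) (adjK : involutive adj)
  (adjD : forall X Y, adj (X + Y) = adj X + adj Y).

Definition state_null (C : A) := forall w, S w -> w C = 0.

Let stateB w : S w -> forall X Y, w (X - Y) = w X - w Y :=
  fun Sw => additive_mapB (linear_functionalD (S_lin Sw)).

Lemma info_equiv_state_null X Y : info_equiv S X Y <-> state_null (X - Y).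
Proof.
split=> [XY w Sw | XY0 w Sw].
- by rewrite (stateB Sw) XY ?subrr.
- by apply/eqP; rewrite -subr_eq0 -(stateB Sw) XY0.
Qed.

Lemma snorm_ge w C : S w -> ((`|w C|)%:E <= snorm S C)%E.
Proof. by move=> Sw; apply: ereal_sup_ubound; exists w. Qed.

Lemma snormB_le C D : (snorm S (C - D) <= snorm S C + snorm S D)%E.
Proof.
apply: ge_ereal_sup => _ [w Sw <-]; rewrite (stateB Sw).
apply: (@le_trans _ _ ((`|w C|)%:E + (`|w D|)%:E)%E).
  by rewrite -EFinD lee_fin ler_normB.
by apply: leeD; apply: snorm_ge.
Qed.

Lemma boundedB C D : bounded S adj C -> bounded S adj D -> bounded S adj (C - D).
Proof.
case=> C_fin C'_fin [D_fin D'_fin]; split.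
  exact: le_lt_trans (snormB_le C D) (lte_add_pinfty C_fin D_fin).
rewrite (additive_mapB adjD).
exact: le_lt_trans (snormB_le _ _) (lte_add_pinfty C'_fin D'_fin).
Qed.

Lemma bounded_adj C : bounded S adj C -> bounded S adj (adj C).
Proof. by case=> ? ?; split; rewrite ?adjK. Qed.

Variable phi : A -> R.
Hypothesis S_phi : S phi.

Lemma snorm_ge0 C : (0 <= snorm S C)%E.
Proof. exact: le_trans (snorm_ge C S_phi). Qed.

Lemma snorm_eq0 C : snorm S C = 0%E <-> state_null C.
Proof.
split=> [C0 w Sw | C_null].
  by have := snorm_ge C Sw; rewrite C0 lee_fin normr_le0 => /eqP.
apply/eqP; rewrite eq_le snorm_ge0 andbT.
by apply: ge_ereal_sup => _ [w Sw <-]; rewrite C_null // normr0.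
Qed.

Hypothesis snormM_le : forall C D, bounded S adj C -> bounded S adj D ->
  (snorm S (C * D) <= snorm S C * snorm S D)%E.

Lemma state_null_mulr C D : bounded S adj C -> bounded S adj D ->
  state_null D -> state_null (C * D).
Proof.
move=> bC bD /snorm_eq0 D0; apply/snorm_eq0/eqP.
by rewrite eq_le snorm_ge0 andbT (le_trans (snormM_le bC bD)) // D0 mule0.
Qed.

Hypotheses (adjM : forall X Y, adj (X * Y) = adj Y * adj X)
  (phi_pos : real_positive phi adj) (phi_prep : prep_faithful S phi adj).

Lemma null_ideal_state_null_adj U : null_ideal phi adj U -> state_null (adj U).
Proof.
move=> U_null w Sw; have [T [_ ->]] := phi_prep Sw.
by rewrite -/(inner phi adj U _) (inner_null_l adjD adjK adjM (S_lin S_phi)) ?mul0r.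
Qed.

Lemma null_ideal_info_equiv X Y : bounded S adj X -> bounded S adj Y ->
  null_ideal phi adj (X - Y) <-> info_equiv S X Y.
Proof.
move=> bX bY; have bZ := boundedB bX bY; have bZ' := bounded_adj bZ.
rewrite info_equiv_state_null; split=> [Z_null | Z_null].
- have Z'_null : null_ideal phi adj (adj (X - Y)).
    rewrite /null_ideal /inner /= adjK.
    exact: state_null_mulr bZ bZ' (null_ideal_state_null_adj Z_null) _ S_phi.
  by rewrite -[X - Y]adjK; apply: null_ideal_state_null_adj.
- exact: state_null_mulr bZ' bZ Z_null _ S_phi.
Qed.

End States.

Theorem mainTheorem9 (R : realType) (A : algType R) (adj : A -> A)
  (S : set (A -> R)) (phi : A -> R) :
  generalized_adjoint adj ->
  linear_states S ->
  S phi ->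
  real_positive phi adj ->
  (forall C D : A, bounded S adj C -> bounded S adj D ->
     (snorm S (C * D) <= snorm S C * snorm S D)%E) ->
  prep_faithful S phi adj ->
  forall X Y : A, bounded S adj X -> bounded S adj Y ->
  (null_ideal phi adj (X - Y) <-> info_equiv S X Y).
Proof.
move=> [adjD adjK adjM _] S_lin S_phi phi_pos snormM_le phi_prep X Y.
exact: null_ideal_info_equiv.
Qed.
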